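(* Let $B$ be a simple soluble skew left brace. Then $B$ is an abelian brace and $(B,+)=(B,\cdot)$ is a cyclic group of prime order.
   Context: A skew left brace (brace) is a set $B$ with two group structures $(B,+)$ and $(B,\cdot)$ with $a(b+c)=ab-a+ac$; $\lambda_a(b)=-a+ab$. An ideal is a subset that is a normal subgroup of both groups and $\lambda_b$-invariant for all $b$. $B$ is simple if $B\neq0$ and its only ideals are $0$ and $B$. For ideals $I,J$, $[I,J]$ is the smallest ideal containing $[I,J]_+$, $[I,J]_\cdot$ and all $ij-(i+j)$; $B$ is abelian if $[B,B]=0$ (i.e. $ab=a+b=b+a$ for all $a,b$). $B$ is soluble if there is a chain $B=I_0\supseteq\cdots\supseteq I_n=0$ with each $I_i$ an ideal of the brace $I_{i-1}$ and $I_{i-1}/I_i$ abelian. *)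

From mathcomp Require Import all_boot.
Set Implicit Arguments. Unset Strict Implicit. Unset Printing Implicit Defensive.

Record skew_brace := SkewBrace {
  car :> Type;
  badd : car -> car -> car;
  bzero : car;
  bneg : car -> car;
  bmul : car -> car -> car;
  bone : car;
  binv : car -> car;
  baddA : forall a b c, badd a (badd b c) = badd (badd a b) c;
  badd0 : forall a, badd a bzero = a;
  b0add : forall a, badd bzero a = a;
  baddN : forall a, badd a (bneg a) = bzero;
  bNadd : forall a, badd (bneg a) a = bzero;
  bmulA : forall a b c, bmul a (bmul b c) = bmul (bmul a b) c;
  bmul1 : forall a, bmul a bone = a;
  b1mul : forall a, bmul bone a = a;
  bmulV : forall a, bmul a (binv a) = bone;
  bVmul : forall a, bmul (binv a) a = bone;
  bbrace : forall a b c,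
    bmul a (badd b c) = badd (badd (bmul a b) (bneg a)) (bmul a c)
}.

Section Defs.
Variable B : skew_brace.
Local Notation "a + b" := (badd a b).
Local Notation "- a" := (bneg a).
Local Notation "a * b" := (bmul a b).

Definition lambda (a b : B) : B := - a + a * b.

(** [J] is an ideal of the sub-brace [S] (S a subset of B closed under the
    brace operations; for S = B this is the usual notion of ideal). *)
Definition ideal_of (S J : B -> Prop) : Prop :=
  (forall x, J x -> S x) /\
  J (bzero B) /\ (forall x y, J x -> J y -> J (x + y)) /\ (forall x, J x -> J (- x)) /\
  (forall s x, S s -> J x -> J (s + x + - s)) /\
  J (bone B) /\ (forall x y, J x -> J y -> J (x * y)) /\ (forall x, J x -> J (binv x)) /\
  (forall s x, S s -> J x -> J (s * x * binv s)) /\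
  (forall s x, S s -> J x -> J (lambda s x)).

Definition full : B -> Prop := fun _ => True.
Definition zero_set : B -> Prop := fun x => x = bzero B.

Definition ideal (I : B -> Prop) := ideal_of full I.

Definition simple_brace : Prop :=
  (exists x : B, x <> bzero B) /\
  forall I, ideal I -> (forall x, I x <-> x = bzero B) \/ (forall x, I x).

(** The quotient S/J is an abelian brace: ab = a+b = b+a modulo J, where
    x = y mod J iff -x+y in J (cosets of an ideal are additive cosets). *)
Definition abelian_quotient (S J : B -> Prop) : Prop :=
  forall a b, S a -> S b ->
    J (- (a + b) + a * b) /\ J (- (a + b) + (b + a)).

Definition soluble_brace : Prop :=
  exists (n : nat) (I : nat -> B -> Prop),
    (forall x, I 0 x) /\ (forall x, I n x <-> x = bzero B) /\
    forall i, i < n -> ideal_of (I i) (I i.+1) /\ abelian_quotient (I i) (I i.+1).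

Definition abelian_brace : Prop :=
  forall a b : B, a * b = a + b /\ a + b = b + a.

Definition nmul (k : nat) (g : B) : B := iter k (badd g) (bzero B).

Definition add_cyclic_prime_order : Prop :=
  exists (p : nat) (g : B), prime p /\
    nmul p g = bzero B /\
    (forall k, 0 < k < p -> nmul k g <> bzero B) /\
    (forall x, exists k, x = nmul k g).

End Defs.

From mathcomp Require Import all_boot.
From mathcomp Require Import zify.
From Stdlib Require Import Classical.
From Stdlib Require Wf_nat.

Set Implicit Arguments. Unset Strict Implicit. Unset Printing Implicit Defensive.

(** The proof has two independent halves.
    - Solubility: along the chain B = I_0 ⊇ ... ⊇ I_n = 0 there is a first
      index k with I_k = B and I_(k+1) <> B.  Then I_(k+1) is an ideal of B
      itself, hence 0 by simplicity, so B = I_k / I_(k+1) is abelian.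
    - Abelian simple braces: when ab = a + b and + is commutative, every
      additive subgroup is an ideal.  Simplicity thus says (B,+) is an
      abelian group with no subgroups besides 0 and B.  Such a group is
      generated by any nonzero x, x has finite order (x lies in the subgroup
      generated by 2x), and the order N of x is prime because for a proper
      divisor d of N the d-torsion subgroup would contain (N/d)x <> 0.
    The file first collects elementary additive-group facts, then the
    group-theoretic half, then the solubility half, and ends with the theorem. *)

Section AdditiveGroup.
Variable B : skew_brace.
Local Notation "a + b" := (badd a b).
Local Notation "- a" := (bneg a).
Local Notation "0" := (bzero B).

Lemma addKl (a b : B) : - a + (a + b) = b.
Proof. by rewrite baddA bNadd b0add. Qed.

Lemma addIl (a b c : B) : a + b = a + c -> b = c.
Proof. by move=> E; rewrite -(addKl a b) E addKl. Qed.

Lemma neg_unique (a b : B) : a + b = 0 -> b = - a.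
Proof. by move=> E; rewrite -(addKl a b) E badd0. Qed.

Lemma eq_of_subr0 (u v : B) : - u + v = 0 -> v = u.
Proof. by move=> E; rewrite -(b0add v) -(baddN u) -baddA E badd0. Qed.

Lemma neg0 : - 0 = 0 :> B.
Proof. by rewrite -(b0add (- 0)) baddN. Qed.

Lemma negK (a : B) : - - a = a.
Proof. by symmetry; apply: neg_unique; rewrite bNadd. Qed.

Lemma nmulS k (g : B) : nmul k.+1 g = g + nmul k g.
Proof. by []. Qed.

Lemma nmul1 (g : B) : nmul 1 g = g.
Proof. exact: badd0. Qed.

Lemma nmulD a b (g : B) : nmul (a + b)%N g = nmul a g + nmul b g.
Proof.
elim: a => [|a IH]; first by rewrite add0n b0add.
by rewrite addSn !nmulS IH baddA.
Qed.

Lemma nmulM a b (g : B) : nmul (a * b)%N g = nmul a (nmul b g).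
Proof.
elim: a => [|a IH]; first by rewrite mul0n.
by rewrite mulSn nmulD IH nmulS.
Qed.

Lemma nmul0r k : nmul k 0 = 0 :> B.
Proof. by elim: k => [|k IH] //; rewrite nmulS IH badd0. Qed.

Lemma nmul_inj_or_torsion (x : B) i j : nmul i x = nmul j x -> i <> j ->
  exists2 n, 0%N < n & nmul n x = 0.
Proof.
wlog lt_ij : i j / i < j => [hwlog E ne|E _].
  by case: (ltngtP i j) => [/hwlog|/hwlog|//]; apply => //; apply: nesym.
exists (j - i); first by rewrite subn_gt0.
by apply: (@addIl (nmul i x)); rewrite -nmulD subnKC ?badd0 // ltnW.
Qed.

End AdditiveGroup.

Section AbelianGroup.
Variable B : skew_brace.
Local Notation "a + b" := (badd a b).
Local Notation "- a" := (bneg a).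
Local Notation "0" := (bzero B).
Hypothesis addC : forall a b : B, a + b = b + a.

Lemma addACA (a b c d : B) : (a + b) + (c + d) = (a + c) + (b + d).
Proof. by rewrite -!baddA; congr (a + _); rewrite !baddA (addC b c). Qed.

Lemma negD (u v : B) : - (u + v) = - u + - v.
Proof. by symmetry; apply: neg_unique; rewrite addACA !baddN badd0. Qed.

Lemma nmulDr k (u v : B) : nmul k (u + v) = nmul k u + nmul k v.
Proof.
elim: k => [|k IH]; first by rewrite badd0.
by rewrite !nmulS IH addACA.
Qed.

Lemma nmulN k (u : B) : nmul k (- u) = - nmul k u.
Proof. by apply: neg_unique; rewrite -nmulDr baddN nmul0r. Qed.

Definition add_subgroup (P : B -> Prop) :=
  P 0 /\ (forall x y, P x -> P y -> P (x + y)) /\ (forall x, P x -> P (- x)).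

Definition span (y : B) : B -> Prop :=
  fun z => exists k m, z = nmul k y + - nmul m y.

Lemma span_subgroup y : add_subgroup (span y).
Proof.
split; first by exists 0%N, 0%N; rewrite neg0 badd0.
split.
  move=> _ _ [k [m ->]] [k' [m' ->]]; exists (k + k')%N, (m + m')%N.
  by rewrite addACA -negD -!nmulD.
by move=> _ [k [m ->]]; exists m, k; rewrite negD negK addC.
Qed.

Lemma span_self y : span y y.
Proof. by exists 1%N, 0%N; rewrite nmul1 neg0 badd0. Qed.

Lemma torsion_subgroup d : add_subgroup (fun z => nmul d z = 0).
Proof.
split; first exact: nmul0r.
split; first by move=> u v Hu Hv; rewrite nmulDr Hu Hv badd0.
by move=> u Hu; rewrite nmulN Hu neg0.
Qed.

Hypothesis subgroup_full :
  forall P y, add_subgroup P -> P y -> y <> 0 -> forall z, P z.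

Lemma torsion_nonzero (x : B) : x <> 0 -> exists2 n, 0%N < n & nmul n x = 0.
Proof.
move=> xn0; case: (classic (nmul 2 x = 0)) => [x2|x2]; first by exists 2.
have [k [m E]] := subgroup_full (span_subgroup (nmul 2 x)) (span_self _) x2 x.
apply: (@nmul_inj_or_torsion _ x (1 + m * 2) (k * 2)); last by lia.
by rewrite nmulD nmul1 !nmulM {1}E -baddA bNadd badd0.
Qed.

Lemma cyclic_prime_of_order (x : B) N : x <> 0 -> 0%N < N -> nmul N x = 0 ->
  (forall k, 0%N < k < N -> nmul k x <> 0) -> add_cyclic_prime_order B.
Proof.
move=> xn0 N_gt0 xN Nmin; exists N, x; split; last split=> //; last split=> //.
- apply/primeP; split.
    by case: N N_gt0 xN Nmin => [|[|N]] //; rewrite nmul1.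
  move=> d dvd_dN; apply/negPn/negP; rewrite negb_or => /andP [d_neq1 d_neqN].
  have d_gt0 : 0%N < d by apply: dvdn_gt0 dvd_dN.
  have d_ltN : d < N by rewrite ltn_neqAle d_neqN dvdn_leq.
  have Nd_eq : (N %/ d * d)%N = N by rewrite divnK.
  have Nd_range : 0%N < N %/ d < N.
    by apply/andP; split; [rewrite divn_gt0 // dvdn_leq | rewrite ltn_Pdiv]; lia.
  have dtors : nmul d (nmul (N %/ d) x) = 0 by rewrite -nmulM mulnC Nd_eq.
  have := subgroup_full (torsion_subgroup d) dtors (Nmin _ Nd_range) x.
  by apply: Nmin; lia.
- move=> z; have [k [m ->]] := subgroup_full (span_subgroup x) (span_self x) xn0 z.
  exists (k + (N - 1) * m)%N; rewrite nmulD; congr (_ + _).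
  symmetry; apply: neg_unique; rewrite -nmulD.
  have -> : (m + (N - 1) * m = m * N)%N by rewrite -mulSn subn1 prednK // mulnC.
  by rewrite nmulM xN nmul0r.
Qed.

Lemma cyclic_prime_of_no_subgroup : (exists x : B, x <> 0) ->
  add_cyclic_prime_order B.
Proof.
move=> [x xn0].
pose has_order n := 0 < n /\ nmul n x = 0.
have [|N [[[N_gt0 xN] Nleast] _]] :=
  @Wf_nat.dec_inh_nat_subset_has_unique_least_element has_order (fun n => classic _).
  by have [n] := torsion_nonzero xn0; exists n.
apply: (cyclic_prime_of_order xn0 N_gt0 xN) => k /andP [k_gt0 k_ltN] xk.
by have /leP := Nleast k (conj k_gt0 xk); rewrite leqNgt k_ltN.
Qed.

End AbelianGroup.

Section AbelianBrace.
Variable B : skew_brace.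
Local Notation "a + b" := (badd a b).
Local Notation "- a" := (bneg a).
Local Notation "a * b" := (bmul a b).
Local Notation "0" := (bzero B).
Hypothesis abB : abelian_brace B.

Let addC (a b : B) : a + b = b + a. Proof. by case: (abB a b). Qed.
Let mulE (a b : B) : a * b = a + b. Proof. by case: (abB a b). Qed.

Lemma one_zero : bone B = 0.
Proof. by apply: (@addIl _ (bone B)); rewrite -mulE bmul1 badd0. Qed.

Lemma inv_neg (x : B) : binv x = - x.
Proof. by apply: neg_unique; rewrite -mulE bmulV one_zero. Qed.

Lemma subgroup_ideal (P : B -> Prop) : add_subgroup P -> ideal P.
Proof.
move=> [P0 [PD PN]].
have Pconj s x : P x -> P (s + x + - s).
  by rewrite (addC s x) -baddA baddN badd0.
do 4 (split; first by []).
split; first by move=> s x _; apply: Pconj.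
split; first by rewrite one_zero.
split; first by move=> x y Px Py; rewrite mulE; apply: PD.
split; first by move=> x Px; rewrite inv_neg; apply: PN.
split; first by move=> s x _ Px; rewrite !mulE inv_neg; apply: Pconj.
by move=> s x _ Px; rewrite /lambda mulE addKl.
Qed.

Lemma simple_abelian_cyclic_prime :
  simple_brace B -> add_cyclic_prime_order B.
Proof.
move=> [Bn0 simp]; apply: (cyclic_prime_of_no_subgroup addC _ Bn0).
move=> P y /subgroup_ideal /simp [P0|//] Py yn0.
by case: yn0; apply/P0.
Qed.

End AbelianBrace.

Lemma first_failure (Q : nat -> Prop) n : Q 0 -> ~ Q n ->
  exists2 k, k < n & Q k /\ ~ Q k.+1.
Proof.
move=> Q0; elim: n => [|n IH] Qn; first by [].
case: (classic (Q n)) => [Qn'|/IH [k k_lt Hk]]; first by exists n.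
by exists k; first exact: ltnW.
Qed.

Section Soluble.
Variable B : skew_brace.
Local Notation "0" := (bzero B).

Lemma ideal_of_full (S J : B -> Prop) : (forall x, S x) -> ideal_of S J -> ideal J.
Proof.
move=> Sfull [_ [J0 [JD [JN [Jconj [J1 [JM [JV [Jmconj Jlam]]]]]]]]].
do 4 (split; first by []).
split; first by move=> s x _; apply: Jconj.
do 3 (split; first by []).
split; first by move=> s x _; apply: Jmconj.
by move=> s x _; apply: Jlam.
Qed.

Lemma abelian_of_quotient_zero (S J : B -> Prop) : (forall x, S x) ->
  (forall x, J x <-> x = 0) -> abelian_quotient S J -> abelian_brace B.
Proof.
move=> Sfull J0 abSJ a b; have [/J0 Emul /J0 Ecomm] := abSJ a b (Sfull a) (Sfull b).
by split; [apply: eq_of_subr0 | symmetry; apply: eq_of_subr0].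
Qed.

Lemma simple_soluble_abelian :
  simple_brace B -> soluble_brace B -> abelian_brace B.
Proof.
move=> [[x xn0] simp] [n [I [I0 [In Ichain]]]].
have [|k k_lt [Ik_full Ik1_notfull]] :=
  @first_failure (fun i => forall y, I i y) n I0.
  by move=> Infull; apply: xn0; apply/In.
have [idk abk] := Ichain k k_lt.
have [Ik1_zero|] := simp _ (ideal_of_full Ik_full idk); last by [].
exact: abelian_of_quotient_zero Ik_full Ik1_zero abk.
Qed.

End Soluble.

Theorem corollary4p5 (B : skew_brace) :
  simple_brace B -> soluble_brace B ->
  abelian_brace B /\ add_cyclic_prime_order B.
Proof.
move=> simpB solB.
have abB := simple_soluble_abelian simpB solB.
by split; last exact: simple_abelian_cyclic_prime.
Qed.
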